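(* Let $n\ge r\ge1$ be integers with $n=r$ or $n>r=1$. Then there exists a constant $\kappa'>0$ such that for every $Z\in{\rm St}(n,r)$, \[ {\rm dist}(Z,\mathcal{S}_{+}^{n,r})\le\kappa'\,{\rm dist}(Z,\mathbb{R}_{+}^{n\times r}). \]
   Context: ${\rm St}(n,r):=\{X\in\mathbb{R}^{n\times r}: X^\top X=I_r\}$, $\mathbb{R}_{+}^{n\times r}$ is the cone of entrywise nonnegative $n\times r$ matrices, $\mathcal{S}_{+}^{n,r}:=\mathbb{R}_{+}^{n\times r}\cap{\rm St}(n,r)$, and ${\rm dist}(X,\Omega)=\inf_{Y\in\Omega}\|X-Y\|_F$ (Frobenius norm). *)

From mathcomp Require Import all_boot all_order all_algebra.
From mathcomp Require Import classical_sets reals.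
Set Implicit Arguments. Unset Strict Implicit. Unset Printing Implicit Defensive.
Import Order.TTheory GRing.Theory Num.Theory.
Local Open Scope ring_scope.
Local Open Scope classical_set_scope.

Definition frob {R : realType} {n r : nat} (X : 'M[R]_(n, r)) : R :=
  Num.sqrt (\sum_(i < n) \sum_(j < r) X i j ^+ 2).

Definition stiefel (R : realType) (n r : nat) : set 'M[R]_(n, r) :=
  [set X | X^T *m X = 1%:M].

Definition nonneg_mx (R : realType) (n r : nat) : set 'M[R]_(n, r) :=
  [set X | forall i j, 0 <= X i j].

Definition nonneg_stiefel (R : realType) (n r : nat) : set 'M[R]_(n, r) :=
  @nonneg_mx R n r `&` @stiefel R n r.

Definition dist {R : realType} {n r : nat} (X : 'M[R]_(n, r))
  (Omega : set 'M[R]_(n, r)) : R :=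
  inf [set frob (X - Y) | Y in Omega].

(* Let d = dist(Z, R_+^{n x r}); every entry of Z is then at least -d.  When d is
   large compared with the dimension any point Y of S_+^{n,r} will do, since
   |Z - Y|^2 <= 4r for Y in St(n,r).  For a unit column z, the normalised positive
   part Y = p/|p| works: |z - Y|^2 = 2 - 2|p| <= 2(1 - |p|^2) <= 2 n d^2.  For a
   square orthogonal Z, orthogonality of the columns bounds every product
   Z_ki Z_kj (i <> j) by m d, and every column has an entry >= 1/(2m); when d is
   small these large entries therefore sit in distinct rows and define a
   permutation matrix P, while all other entries are O(m^2 d), so that
   |Z - P| = O(m^3 d). *)

From mathcomp Require Import all_boot all_order all_algebra fingroup perm.
From mathcomp Require Import classical_sets reals.
From mathcomp Require Import ring lra.
Import Order.TTheory GRing.Theory Num.Theory.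
Local Open Scope ring_scope.

Set Implicit Arguments.
Unset Strict Implicit.
Unset Printing Implicit Defensive.

Section Frobenius.
Variable R : realType.
Implicit Types (n r : nat) (c : R).

Definition frob2 n r (X : 'M[R]_(n, r)) := \sum_i \sum_j X i j ^+ 2.

Definition frobdot n r (X Y : 'M[R]_(n, r)) := \sum_i \sum_j X i j * Y i j.

Lemma frob2_ge0 n r (X : 'M[R]_(n, r)) : 0 <= frob2 X.
Proof. by do 2![apply: sumr_ge0 => ? _]; exact: sqr_ge0. Qed.

Lemma frob_le n r (X : 'M[R]_(n, r)) c : 0 <= c -> frob2 X <= c ^+ 2 -> frob X <= c.
Proof. by move=> c_ge0 le_Xc; rewrite /frob -(ger0_norm c_ge0) -sqrtr_sqr ler_sqrt ?sqr_ge0. Qed.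

Lemma abs_entry_le_frob n r (X : 'M[R]_(n, r)) i j : `|X i j| <= frob X.
Proof.
rewrite /frob -sqrtr_sqr ler_sqrt ?frob2_ge0 // (bigD1 i) //= (bigD1 j) //= -addrA lerDl.
apply: addr_ge0; apply: sumr_ge0 => k _; last apply: sumr_ge0 => l _; exact: sqr_ge0.
Qed.

Lemma frob2B n r (X Y : 'M[R]_(n, r)) :
  frob2 (X - Y) = frob2 X + frob2 Y - 2 * frobdot X Y.
Proof.
rewrite /frob2 /frobdot mulr_sumr -!big_split -sumrB /=; apply: eq_bigr => i _.
rewrite mulr_sumr -!big_split -sumrB /=; apply: eq_bigr => j _.
by rewrite !mxE; ring.
Qed.

Lemma frob2Z n r a (X : 'M[R]_(n, r)) : frob2 (a *: X) = a ^+ 2 * frob2 X.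
Proof.
rewrite /frob2 mulr_sumr; apply: eq_bigr => i _; rewrite mulr_sumr.
by apply: eq_bigr => j _; rewrite mxE exprMn.
Qed.

Lemma frobdotZr n r a (X Y : 'M[R]_(n, r)) : frobdot X (a *: Y) = a * frobdot X Y.
Proof.
rewrite /frobdot mulr_sumr; apply: eq_bigr => i _; rewrite mulr_sumr.
by apply: eq_bigr => j _; rewrite mxE mulrCA.
Qed.

Lemma frob2B_le n r (X Y : 'M[R]_(n, r)) : frob2 (X - Y) <= 2 * frob2 X + 2 * frob2 Y.
Proof.
rewrite /frob2 !mulr_sumr -big_split /=; apply: ler_sum => i _.
rewrite !mulr_sumr -big_split /=; apply: ler_sum => j _.
by rewrite !mxE; have := sqr_ge0 (X i j + Y i j); nra.
Qed.

Lemma unit_sum_sqr_sub_delta n (x : 'I_n -> R) k :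
  \sum_l x l ^+ 2 = 1 -> 0 <= x k ->
  \sum_l (x l - (l == k)%:R) ^+ 2 <= 2 * \sum_(l | l != k) x l ^+ 2.
Proof.
move=> x1 xk_ge0; rewrite (bigD1 k) //= eqxx mulr1n.
rewrite (eq_bigr (fun l => x l ^+ 2)) => [|l /negbTE ->]; last by rewrite subr0.
rewrite (bigD1 k) //= in x1.
have : x k ^+ 2 <= 1 by rewrite -x1 lerDl sumr_ge0 // => *; exact: sqr_ge0.
rewrite expr_le1 // => xk_le1.
have : x k ^+ 2 <= x k by rewrite expr2 ler_piMl.
by nra.
Qed.

Lemma dist_le_frob n r (X Y : 'M[R]_(n, r)) (O : set 'M[R]_(n, r)) :
  O Y -> dist X O <= frob (X - Y).
Proof.
move=> OY; apply: ge_inf; last by exists Y.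
by exists 0 => _ [Y' _ <-]; exact: sqrtr_ge0.
Qed.

Lemma dist_nonneg_mx_ge0 n r (X : 'M[R]_(n, r)) : 0 <= dist X (@nonneg_mx R n r).
Proof.
apply: lb_le_inf => [|_ [Y _ <-]]; last exact: sqrtr_ge0.
by exists (frob (X - 0)), 0 => // i j; rewrite mxE.
Qed.

Lemma dist_nonneg_mx_entry n r (X : 'M[R]_(n, r)) i j :
  - dist X (@nonneg_mx R n r) <= X i j.
Proof.
rewrite lerNl; apply: lb_le_inf => [|_ [Y Y_ge0 <-]].
  by exists (frob (X - 0)), 0 => // ? ?; rewrite mxE.
apply: le_trans (abs_entry_le_frob (X - Y) i j); rewrite !mxE.
by have := Y_ge0 i j; rewrite ler_normr => ?; apply/orP; right; lra.
Qed.

Lemma dist_le_frob2 n r (X Y : 'M[R]_(n, r)) (O : set 'M[R]_(n, r)) c :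
  O Y -> 0 <= c -> frob2 (X - Y) <= c ^+ 2 -> dist X O <= c.
Proof. by move=> OY c_ge0 le_XYc; apply: le_trans (dist_le_frob X OY) (frob_le _ _). Qed.

End Frobenius.

Section Stiefel.
Variable R : realType.
Implicit Types (n r : nat) (c d : R).

Lemma stiefelP n r (Z : 'M[R]_(n, r)) :
  stiefel Z <-> forall i j, \sum_k Z k i * Z k j = (i == j)%:R.
Proof.
split=> [SZ i j | SZ].
  by have /matrixP/(_ i j) := SZ; rewrite !mxE => <-; apply: eq_bigr => k _; rewrite mxE.
by apply/matrixP => i j; rewrite !mxE -SZ; apply: eq_bigr => k _; rewrite mxE.
Qed.

Lemma stiefel_col_sqr n r (Z : 'M[R]_(n, r)) j : stiefel Z -> \sum_k Z k j ^+ 2 = 1.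
Proof.
move=> /stiefelP/(_ j j); rewrite eqxx mulr1n => <-.
by apply: eq_bigr => k _; rewrite expr2.
Qed.

Lemma stiefel_frob2 n r (Z : 'M[R]_(n, r)) : stiefel Z -> frob2 Z = r%:R.
Proof.
move=> SZ; rewrite /frob2 exchange_big (eq_bigr (fun=> 1)) ?sumr_const ?card_ord // => j _.
exact: stiefel_col_sqr.
Qed.

Lemma stiefel_entry_le1 n r (Z : 'M[R]_(n, r)) i j : stiefel Z -> Z i j <= 1.
Proof.
move=> /(stiefel_col_sqr j) col.
have : Z i j ^+ 2 <= 1 by rewrite -col (bigD1 i) //= lerDl sumr_ge0 // => *; exact: sqr_ge0.
by nra.
Qed.

Lemma stiefel_cVP n (z : 'cV[R]_n) : stiefel z <-> frob2 z = 1.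
Proof.
have frob2E : frob2 z = \sum_k z k 0 * z k 0.
  by rewrite /frob2; apply: eq_bigr => k _; rewrite big_ord1 expr2.
rewrite frob2E; split=> [/stiefelP/(_ 0 0) // | z1]; apply/stiefelP => i j.
by rewrite !ord1 eqxx.
Qed.

Lemma stiefel_entry_mul_le n r (Z : 'M[R]_(n, r)) d i j k :
  stiefel Z -> 0 <= d -> (forall l j, - d <= Z l j) -> i != j ->
  Z k i * Z k j <= n%:R * d.
Proof.
move=> SZ d_ge0 Z_ge /negbTE neq_ij.
have prod_ge l : - d <= Z l i * Z l j.
  have := Z_ge l i; have := Z_ge l j.
  have := stiefel_entry_le1 l i SZ; have := stiefel_entry_le1 l j SZ.
  by case: (leP 0 (Z l i)); case: (leP 0 (Z l j)); nra.
have : Z k i * Z k j + d <= \sum_l (Z l i * Z l j + d).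
  rewrite (bigD1 k) //= lerDl; apply: sumr_ge0 => l _; have := prod_ge l; lra.
have /stiefelP/(_ i j) := SZ; rewrite neq_ij => orth.
by rewrite big_split /= orth sumr_const card_ord add0r -mulr_natl; lra.
Qed.

Lemma pid_mx_nonneg_stiefel n r : (r <= n)%N -> nonneg_stiefel (pid_mx r : 'M[R]_(n, r)).
Proof.
move=> le_rn; split=> [i j|]; first by rewrite mxE ler0n.
by rewrite /stiefel /= tr_pid_mx mul_pid_mx minnn (minn_idPr le_rn) pid_mx_1.
Qed.

Lemma perm_mx_nonneg_stiefel n (s : 'S_n) : nonneg_stiefel (perm_mx s : 'M[R]_n).
Proof.
split=> [i j|]; first by rewrite !mxE ler0n.
by rewrite /stiefel /= tr_perm_mx -perm_mxM mulVg perm_mx1.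
Qed.

Lemma dist_nonneg_stiefel_coarse n r (Z : 'M[R]_(n, r)) c :
  (r <= n)%N -> stiefel Z -> 0 <= c -> 4 * r%:R <= c ^+ 2 ->
  dist Z (@nonneg_stiefel R n r) <= c.
Proof.
move=> le_rn SZ c_ge0 large; have SP := pid_mx_nonneg_stiefel le_rn.
apply: (dist_le_frob2 SP) => //; apply: le_trans (frob2B_le _ _) _.
by rewrite !stiefel_frob2 //; [lra | case: SP].
Qed.

End Stiefel.

Lemma dist_nonneg_stiefel_cV (R : realType) n (z : 'cV[R]_n) (d : R) :
  (0 < n)%N -> stiefel z -> 0 <= d -> (forall i j, - d <= z i j) ->
  dist z (@nonneg_stiefel R n 1) <= 2 * n%:R * d.
Proof.
move=> n_gt0 Sz d_ge0 z_ge.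
have n_ge1 : 1 <= n%:R :> R by rewrite ler1n.
have c_ge0 : 0 <= 2 * n%:R * d by rewrite !mulr_ge0 // ler0n.
have [far | near] := leP 1 (n%:R * d ^+ 2).
  by apply: dist_nonneg_stiefel_coarse => //; nra.
have z1 : frob2 z = 1 by apply/stiefel_cVP.
pose p := map_mx (fun x => Num.max x 0) z.
have p_ge0 i j : 0 <= p i j by rewrite mxE le_max lexx orbT.
have zp : frobdot z p = frob2 p.
  rewrite /frobdot /frob2; apply: eq_bigr => i _; apply: eq_bigr => j _; rewrite mxE.
  by have [zle0|zgt0] := leP (z i j) 0; rewrite ?mulr0 ?expr0n // expr2.
have gap : 1 - frob2 p <= n%:R * d ^+ 2.
  rewrite -[X in X - _]z1 /frob2 -sumrB.
  apply: le_trans (_ : \sum_(i < n) d ^+ 2 <= _); last by rewrite sumr_const card_ord mulr_natl.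
  apply: ler_sum => i _; rewrite -sumrB big_ord1 mxE; have := z_ge i 0.
  by have [zle0|zgt0] := leP (z i 0) 0; rewrite ?expr0n ?subr0 ?subrr; nra.
set a := Num.sqrt (frob2 p).
have a_gt0 : 0 < a by rewrite sqrtr_gt0; lra.
have a2 : a ^+ 2 = frob2 p by rewrite sqr_sqrtr ?frob2_ge0.
have SY : nonneg_stiefel (a^-1 *: p).
  split=> [i j|]; first by rewrite mxE mulr_ge0 // invr_ge0 ltW.
  by apply/stiefel_cVP; rewrite frob2Z -a2 exprVn mulVf // expf_neq0 ?gt_eqF.
apply: (dist_le_frob2 SY) => //.
rewrite frob2B frob2Z frobdotZr zp -a2 z1.
have -> : 1 + a^-1 ^+ 2 * a ^+ 2 - 2 * (a^-1 * a ^+ 2) = 2 - 2 * a.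
  by field; rewrite gt_eqF.
have nd2 : n%:R * d ^+ 2 <= 2 * n%:R * (n%:R * d ^+ 2).
  by rewrite ler_peMl ?mulr_ge0 ?sqr_ge0 //; lra.
have -> : (2 * n%:R * d) ^+ 2 = 2 * (2 * n%:R * (n%:R * d ^+ 2)) by ring.
have [a_le1|a_gt1] := leP a 1; last by nra.
have : a ^+ 2 <= a by rewrite expr2 ger_pMl.
lra.
Qed.

Section SquareCase.
Variables (R : realType) (m : nat) (Z : 'M[R]_m) (d : R).
Hypotheses (SZ : stiefel Z) (d_ge0 : 0 <= d) (Z_ge : forall i j, - d <= Z i j).
Hypothesis m_gt0 : (0 < m)%N.

Local Notation M := (m%:R : R).
Hypothesis d_small : 4 * M ^+ 3 * d < 1.
Local Notation t := (2 * M)^-1.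

Let M_ge1 : 1 <= M. Proof. by rewrite ler1n. Qed.

Let M_gt0 : 0 < M. Proof. exact: lt_le_trans ltr01 M_ge1. Qed.

Let tM : 2 * M * t = 1. Proof. by rewrite mulfV // gt_eqF // mulr_gt0. Qed.

Let t_gt0 : 0 < t. Proof. by rewrite invr_gt0 mulr_gt0. Qed.

Let d_le_t : d <= t.
Proof.
have M_le_M3 : M <= M ^+ 3 by rewrite -[X in X <= _]expr1 ler_weXn2l.
have le_2Md : 2 * M * d <= 1.
  apply: le_trans (ltW d_small); apply: ler_wpM2r => //.
  by apply: ler_pM; rewrite ?ler_nat // ltW.
have -> : d = 2 * M * d * t by rewrite mulrAC tM mul1r.
exact: ler_piMl (ltW t_gt0) le_2Md.
Qed.

Let col_large_entry j : exists k, t <= Z k j.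
Proof.
apply/existsP; apply: contraT => /existsPn col_small.
have : 1 <= M * t ^+ 2.
  have -> : M * t ^+ 2 = \sum_(k < m) t ^+ 2 by rewrite sumr_const card_ord mulr_natl.
  rewrite -[X in X <= _](stiefel_col_sqr j SZ); apply: ler_sum => k _.
  have := col_small k; rewrite -ltNge => Zkj_lt; have := Z_ge k j; have := d_le_t.
  by nra.
have -> : M * t ^+ 2 = t / 2 by field; rewrite gt_eqF.
have two_le : 2 <= 2 * M by have := M_ge1; lra.
have : 2 * t <= 2 * M * t by apply: ler_wpM2r; [exact: ltW | exact: two_le].
by have := tM; lra.
Qed.

Let s j := xchoose (col_large_entry j).

Let large_entry j : t <= Z (s j) j. Proof. exact: (xchooseP (col_large_entry j)). Qed.

Let s_inj : injective s.
Proof.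
move=> i j eq_s; apply/eqP; apply: contraT => neq_ij.
have prod_le := stiefel_entry_mul_le (s i) SZ d_ge0 Z_ge neq_ij.
have prod_ge : t * t <= Z (s i) i * Z (s i) j.
  by apply: ler_pM; [exact: ltW | exact: ltW | exact: large_entry | rewrite eq_s].
have tt : 4 * M ^+ 2 * (t * t) = 1 by field; rewrite gt_eqF.
have : 4 * M ^+ 2 * (t * t) <= 4 * M ^+ 2 * (M * d).
  by apply: ler_wpM2l; [rewrite mulr_ge0 ?sqr_ge0 | exact: le_trans prod_ge prod_le].
rewrite tt => le1; have : 4 * M ^+ 2 * (M * d) = 4 * M ^+ 3 * d by ring.
by have := d_small; lra.
Qed.

Let sigma : {perm 'I_m} := perm s_inj.

Let off_entry_sqr l j : l != s j -> Z l j ^+ 2 <= (2 * M ^+ 2 * d) ^+ 2.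
Proof.
move=> neq_l; pose i := (sigma^-1)%g l.
have s_i : s i = l by rewrite -[s i](permE s_inj) permKV.
have neq_ij : i != j by apply: contra neq_l => /eqP <-; rewrite s_i.
have prod_le := stiefel_entry_mul_le l SZ d_ge0 Z_ge neq_ij.
have t_le := large_entry i; rewrite s_i in t_le.
have two_M2 : 1 <= 2 * M ^+ 2 by have := exprn_ege1 2 M_ge1; lra.
have d_le : d <= 2 * M ^+ 2 * d := ler_peMl d_ge0 two_M2.
have Zlj_le : Z l j <= 2 * M ^+ 2 * d.
  have [Zlj_ge0 | Zlj_lt0] := leP 0 (Z l j); last exact: le_trans (ltW Zlj_lt0) (le_trans d_ge0 d_le).
  have tZ_le : t * Z l j <= M * d := le_trans (ler_wpM2r Zlj_ge0 t_le) prod_le.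
  have -> : 2 * M ^+ 2 * d = 2 * M * (M * d) by ring.
  have -> : Z l j = 2 * M * (t * Z l j) by rewrite mulrA tM mul1r.
  by apply: ler_wpM2l tZ_le; rewrite mulr_ge0 // ltW.
have := Z_ge l j; nra.
Qed.

Lemma dist_nonneg_stiefel_square_small : dist Z (@nonneg_stiefel R m m) <= 4 * M ^+ 3 * d.
Proof.
pose P : 'M[R]_m := perm_mx (sigma^-1)%g.
have ZPE l j : (Z - P) l j = Z l j - (l == s j)%:R.
  by rewrite !mxE (canF_eq (permKV sigma)) permE.
set c := (2 * M ^+ 2 * d) ^+ 2.
have col j : \sum_l (Z - P) l j ^+ 2 <= 2 * (M * c).
  under eq_bigr do rewrite ZPE.
  have Zsj_ge0 : 0 <= Z (s j) j := le_trans (ltW t_gt0) (large_entry j).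
  apply: le_trans (unit_sum_sqr_sub_delta (stiefel_col_sqr j SZ) Zsj_ge0) _.
  apply: ler_wpM2l => //; apply: le_trans (_ : \sum_(l | l != s j) c <= _).
    by apply: ler_sum => l; exact: off_entry_sqr.
  have -> : M * c = \sum_(l < m) c by rewrite sumr_const card_ord mulr_natl.
  by rewrite [X in _ <= X](bigD1 (s j)) //= lerDr sqr_ge0.
have c_ge0 : 0 <= 4 * M ^+ 3 * d by rewrite !mulr_ge0 // ltW.
apply: (dist_le_frob2 (perm_mx_nonneg_stiefel R (sigma^-1)%g) c_ge0).
rewrite /frob2 exchange_big /=; apply: le_trans (_ : \sum_(j < m) 2 * (M * c) <= _).
  by apply: ler_sum => j _; exact: col.
rewrite sumr_const card_ord -(mulr_natl (2 * (M * c))) /c.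
have -> : M * (2 * (M * (2 * M ^+ 2 * d) ^+ 2)) = 8 * (M ^+ 3 * d) ^+ 2 by ring.
have -> : (4 * M ^+ 3 * d) ^+ 2 = 16 * (M ^+ 3 * d) ^+ 2 by ring.
by have := sqr_ge0 (M ^+ 3 * d); lra.
Qed.

End SquareCase.

Lemma dist_nonneg_stiefel_square (R : realType) m (Z : 'M[R]_m) (d : R) :
  (0 < m)%N -> stiefel Z -> 0 <= d -> (forall i j, - d <= Z i j) ->
  dist Z (@nonneg_stiefel R m m) <= 8 * m%:R ^+ 4 * d.
Proof.
move=> m_gt0 SZ d_ge0 Z_ge; set M : R := m%:R.
have M_ge1 : 1 <= M by rewrite ler1n.
have M_le_M2 : M <= M ^+ 2 by rewrite -[X in X <= _]expr1 ler_weXn2l.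
have [large | small] := leP 1 (4 * M ^+ 3 * d).
  apply: dist_nonneg_stiefel_coarse => //; first by rewrite !mulr_ge0 ?exprn_ge0 //; lra.
  have -> : (8 * M ^+ 4 * d) ^+ 2 = 4 * M ^+ 2 * (4 * M ^+ 3 * d) ^+ 2 by ring.
  have : 1 <= (4 * M ^+ 3 * d) ^+ 2 by rewrite exprn_ege1.
  by nra.
apply: le_trans (dist_nonneg_stiefel_square_small SZ d_ge0 Z_ge m_gt0 small) _.
have M3_ge1 : 1 <= M ^+ 3 := exprn_ege1 3 M_ge1.
have M3_le_M4 : M ^+ 3 <= M ^+ 4 by rewrite ler_weXn2l.
by rewrite ler_wpM2r //; lra.
Qed.

Theorem corollary3p5 (R : realType) (n r : nat) :
  (1 <= r)%N -> (r <= n)%N -> (n = r \/ (r < n)%N /\ r = 1%N) ->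
  exists kappa : R, 0 < kappa /\
    forall Z : 'M[R]_(n, r), @stiefel R n r Z ->
      dist Z (@nonneg_stiefel R n r) <= kappa * dist Z (@nonneg_mx R n r).
Proof.
move=> r_gt0 le_rn shape.
have n_gt0 : (0 < n)%N := leq_trans r_gt0 le_rn.
suff [kappa kappa_gt0 dist_le] : exists2 kappa : R, 0 < kappa &
    forall (Z : 'M[R]_(n, r)) d, stiefel Z -> 0 <= d -> (forall i j, - d <= Z i j) ->
    dist Z (@nonneg_stiefel R n r) <= kappa * d.
  exists kappa; split=> // Z SZ.
  exact: dist_le SZ (dist_nonneg_mx_ge0 Z) (dist_nonneg_mx_entry Z).
case: shape => [eq_nr | [_ eq_r1]]; [subst n | subst r].
- exists (8 * r%:R ^+ 4); first by rewrite mulr_gt0 // exprn_gt0 // ltr0n.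
  by move=> Z d; exact: dist_nonneg_stiefel_square.
- exists (2 * n%:R); first by rewrite mulr_gt0 // ltr0n.
  by move=> Z d; exact: dist_nonneg_stiefel_cV.
Qed.
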